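(* For every integer $n\ge 8$, Sepy has a winning strategy in the Dom-start Disjoint Domination Game played on the cycle $C_n$.
   Context: For a vertex $v$ of a graph $G$, $N[v]$ denotes its closed neighborhood. The Disjoint Domination Game on an isolate-free graph $G$ is played by Dom and Sepy with colors $p$ and $b$; $V_p,V_b$ denote the current sets of vertices of each color. Players alternate; either player may use either color. A move chooses a vertex $v$ and a color $c$ such that (i) $v$ is uncolored and (ii) some $u\in N[v]$ satisfies $N[u]\cap V_c=\emptyset$ (before the move); then $v$ gets color $c$. A player must make a legal move on his turn (no passing). The game ends as soon as either (s* ) some vertex $v$ has $N[v]\subseteq V_p$ or $N[v]\subseteq V_b$ — Sepy wins; or (d* ) both $V_p$ and $V_b$ are dominating sets — Dom wins. In the Dom-start game Dom moves first. *)

From mathcomp Require Import all_boot.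
Set Implicit Arguments. Unset Strict Implicit. Unset Printing Implicit Defensive.

Section Game.
Variables (T : finType) (e : rel T).

Definition cnbhd (v : T) : {set T} := [set u | (u == v) || e v u].

(* a position: each vertex is uncolored (None), colored p (Some true)
   or colored b (Some false) *)
Definition position := T -> option bool.

Definition Vc (s : position) (c : bool) : {set T} := [set v | s v == Some c].

Definition dominating (D : {set T}) : Prop :=
  forall v : T, exists2 u, u \in cnbhd v & u \in D.

Definition legal (s : position) (v : T) (c : bool) : Prop :=
  s v = None /\ exists2 u, u \in cnbhd v & [disjoint cnbhd u & Vc s c].

Definition play (s : position) (v : T) (c : bool) : position :=
  fun x => if x == v then Some c else s x.

Definition sepy_end (s : position) : Prop :=
  exists v, cnbhd v \subset Vc s true \/ cnbhd v \subset Vc s false.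

Definition dom_end (s : position) : Prop :=
  dominating (Vc s true) /\ dominating (Vc s false).

(* SepyWins dom_to_move s : Sepy has a winning strategy from position s,
   where dom_to_move says whose turn it is. *)
Inductive SepyWins : bool -> position -> Prop :=
| SW_end : forall t s, sepy_end s -> SepyWins t s
| SW_dom : forall s, ~ sepy_end s -> ~ dom_end s ->
    (forall v c, legal s v c -> SepyWins false (play s v c)) ->
    SepyWins true s
| SW_sepy : forall s v c, ~ sepy_end s -> ~ dom_end s ->
    legal s v c -> SepyWins true (play s v c) -> SepyWins false s.

Definition empty_position : position := fun _ => None.

Definition sepy_wins_dom_start : Prop := SepyWins true empty_position.

End Game.

Definition cycle_rel (n : nat) : rel 'I_n :=
  fun i j => (val j == (val i).+1 %% n) || (val i == (val j).+1 %% n).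

(* Sepy copies Dom's first move: if Dom colours v with c, Sepy colours v+1 with c.
   After Dom's second move w, Sepy completes a monochromatic closed neighbourhood:
   if w is one of v+2, v+3, v+4 she colours v-1 with c, filling N[v]; otherwise she
   colours v+2 with c, filling N[v+1].  Her move is legal because N[v-2], resp.
   N[v+3], contains no coloured vertex, which needs n >= 8 to keep v+4 away from v-3.
   The game cannot end earlier: every closed neighbourhood has 3 vertices, and a
   dominating set of C_n has at least n/3 > 2 of them, so both colours dominating
   needs 6 coloured vertices. *)

From mathcomp Require Import all_boot zify.

Set Implicit Arguments.
Unset Strict Implicit.
Unset Printing Implicit Defensive.

Section Positions.
Variables (T : finType) (e : rel T).
Implicit Types (s : position T) (v x : T) (c d : bool).

Definition colored s : {set T} := [set x | s x != None].

Lemma Vc_sub_colored s c : Vc s c \subset colored s.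
Proof. by apply/subsetP => x; rewrite !inE => /eqP ->. Qed.

Lemma colored_play s v c : colored (play s v c) = v |: colored s.
Proof. by apply/setP => x; rewrite !inE /play; case: (x == v). Qed.

Lemma colored_empty : colored (@empty_position T) = set0.
Proof. by apply/setP => x; rewrite !inE. Qed.

Lemma card_colored_play s v c : #|colored (play s v c)| <= #|colored s|.+1.
Proof. by rewrite colored_play cardsU1; case: (_ \notin _). Qed.

Lemma in_Vc_play s v d c x :
  (x \in Vc (play s v d) c) = if x == v then d == c else x \in Vc s c.
Proof. by rewrite !inE /play; case: (x == v). Qed.

Lemma card_Vc_colored s : #|Vc s true| + #|Vc s false| <= #|colored s|.
Proof.
have disjVc : Vc s true :&: Vc s false = set0.
  by apply/setP => x; rewrite !inE; case: (s x) => [[]|].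
rewrite -cardsUI disjVc cards0 addn0 subset_leq_card //.
by rewrite subUset !Vc_sub_colored.
Qed.

Lemma legal_uncolored s v u c :
  v \notin colored s -> u \in cnbhd e v -> [disjoint cnbhd e u & colored s] ->
  legal e s v c.
Proof.
rewrite inE negbK => /eqP v_free uNv disj_u; split=> //; exists u => //.
exact: disjointWr (Vc_sub_colored s c) disj_u.
Qed.

Lemma sepy_endP s :
  reflect (sepy_end e s)
    [exists x, (cnbhd e x \subset Vc s true) || (cnbhd e x \subset Vc s false)].
Proof. by apply: (iffP existsP) => -[x Nx]; exists x; apply/orP. Qed.

Lemma sepy_end_card s : sepy_end e s -> exists x, #|cnbhd e x| <= #|colored s|.
Proof.
case=> x Nx; exists x; apply: subset_leq_card.
by case: Nx => /subset_trans; apply; apply: Vc_sub_colored.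
Qed.

Lemma card_bigcup_le (I : finType) (P : pred I) (F : I -> {set T}) :
  #|\bigcup_(i | P i) F i| <= \sum_(i | P i) #|F i|.
Proof.
apply: (big_ind2 (fun (A : {set T}) k => #|A| <= k)) => [|A k B l leAk leBl|//].
  by rewrite cards0.
exact: leq_trans (leq_card_setU A B) (leq_add leAk leBl).
Qed.

Lemma dominating_card (D : {set T}) :
  symmetric e -> dominating e D -> #|T| <= \sum_(u in D) #|cnbhd e u|.
Proof.
move=> e_sym domD; rewrite -cardsT; apply: leq_trans (card_bigcup_le _ _).
apply: subset_leq_card; apply/subsetP => v _; have [u vNu uD] := domD v.
by apply/bigcupP; exists u => //; move: vNu; rewrite !inE eq_sym e_sym.
Qed.

Lemma sepy_wins_by_closing s v c u x :
  ~ sepy_end e s -> ~ dom_end e s ->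
  v \notin colored s -> u \in cnbhd e v -> [disjoint cnbhd e u & colored s] ->
  cnbhd e x \subset Vc (play s v c) c -> SepyWins e false s.
Proof.
move=> live nodom v_free uNv disj_u closed_x.
apply: SW_sepy (legal_uncolored c v_free uNv disj_u) _ => //.
by apply: SW_end; exists x; case: c closed_x; auto.
Qed.

End Positions.

Section Cycle.
Variable n : nat.
Hypothesis n_ge8 : 8 <= n.
Notation E := (@cycle_rel n).

Lemma n_gt0 : 0 < n. Proof. exact: leq_trans n_ge8. Qed.

Definition shift (x : 'I_n) (k : nat) : 'I_n := Ordinal (ltn_pmod (x + k) n_gt0).

Lemma shift_add x i j : shift (shift x i) j = shift x (i + j).
Proof. by apply: val_inj; rewrite /= modnDml addnA. Qed.

Lemma shift0 x : shift x 0 = x.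
Proof. by apply: val_inj; rewrite /= addn0 modn_small. Qed.

Lemma shift_n x : shift x n = x.
Proof. by apply: val_inj; rewrite /= modnDr modn_small. Qed.

Lemma eq_shift x i j : i < n -> j < n -> (shift x i == shift x j) = (i == j).
Proof.
move=> lt_in lt_jn; apply/eqP/eqP => [/(congr1 val)/eqP|->] //=.
by rewrite eqn_modDl !modn_small // => /eqP.
Qed.

Lemma eq_shift8 x i j : i < 8 -> j < 8 -> (shift x i == shift x j) = (i == j).
Proof. by move=> lt_i8 lt_j8; rewrite eq_shift // (leq_trans _ n_ge8). Qed.

Lemma shift_surj x k : k <= n -> exists a, x = shift a k.
Proof. by move=> le_kn; exists (shift x (n - k)); rewrite shift_add subnK ?shift_n. Qed.

Lemma cycle_rel_sym : symmetric E.
Proof. by move=> i j; rewrite /cycle_rel orbC. Qed.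

Lemma cnbhd_cycle x : cnbhd E x = [set x; shift x 1; shift x (n - 1)].
Proof.
apply/setP => u; rewrite !inE /cycle_rel -orbA; congr (_ || (_ || _)).
  by apply/eqP/eqP => [uE|->]; [apply: val_inj; rewrite /= addn1 | rewrite /= addn1].
apply/eqP/eqP => [xE|->].
  have -> : x = shift u 1 by apply: val_inj; rewrite /= addn1.
  by rewrite shift_add add1n subn1 prednK ?n_gt0 ?shift_n.
by rewrite /= -addn1 modnDml -addnA subnK ?modnDr ?modn_small // n_gt0.
Qed.

Lemma cnbhd_shift x j :
  0 < j -> cnbhd E (shift x j) = [set shift x j.-1; shift x j; shift x j.+1].
Proof.
move=> j_gt0; rewrite cnbhd_cycle !shift_add addn1.
rewrite (_ : j + (n - 1) = j.-1 + n); last by rewrite -subn1; lia.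
rewrite -shift_add shift_n; apply/setP => u; by rewrite !inE orbC orbA.
Qed.

Lemma card_cnbhd_cycle x : #|cnbhd E x| = 3.
Proof.
have n1_neq0 : (0 == n - 1) = false by apply/eqP; lia.
have n1_neq1 : (1 == n - 1) = false by apply/eqP; lia.
rewrite cnbhd_cycle -{1}(shift0 x) -setUA cardsU1 cards2 !inE.
by rewrite !eq_shift ?n1_neq0 ?n1_neq1 //; lia.
Qed.

Lemma cycle_not_sepy_end (s : position 'I_n) : #|colored s| <= 2 -> ~ sepy_end E s.
Proof.
move=> le_s2 /sepy_end_card [x]; rewrite card_cnbhd_cycle => le_3s.
by have := leq_trans le_3s le_s2.
Qed.

Lemma dominating_cycle_card (D : {set 'I_n}) : dominating E D -> 3 <= #|D|.
Proof.
move=> /(dominating_card cycle_rel_sym).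
under eq_bigr do rewrite card_cnbhd_cycle.
rewrite sum_nat_const card_ord; move: #|D| => k; lia.
Qed.

Lemma cycle_not_dom_end (s : position 'I_n) : #|colored s| <= 5 -> ~ dom_end E s.
Proof.
move=> le_s5 [/dominating_cycle_card dom_p /dominating_cycle_card dom_b].
by have := leq_trans (leq_add dom_p dom_b) (card_Vc_colored s); lia.
Qed.

(* Vertices are written [shift a k] with [k < 8], so that Dom's first move is
   [shift a 3] and distinct offsets give distinct vertices. *)
Definition twin (a : 'I_n) (c : bool) : position 'I_n :=
  play (play (@empty_position _) (shift a 3) c) (shift a 4) c.

Lemma colored_twin a c : colored (twin a c) = [set shift a 4; shift a 3].
Proof. by rewrite !colored_play colored_empty setU0. Qed.

Lemma card_colored_twin a c : #|colored (twin a c)| = 2.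
Proof. by rewrite colored_twin cards2 eq_shift8. Qed.

Lemma twin_not_dom_end a c w d : ~ dom_end E (play (twin a c) w d).
Proof.
by apply: cycle_not_dom_end; rewrite (leq_trans (card_colored_play _ _ _)) ?card_colored_twin.
Qed.

Lemma sepy_wins_twin_near a c w d :
  w \in [set shift a 5; shift a 6; shift a 7] ->
  ~ sepy_end E (play (twin a c) w d) -> SepyWins E false (play (twin a c) w d).
Proof.
move=> w_near live.
have [ne0w ne1w ne2w ne3w ne4w] : [/\ (shift a 0 == w) = false, (shift a 1 == w) = false,
    (shift a 2 == w) = false, (shift a 3 == w) = false & (shift a 4 == w) = false].
  by move: w_near; rewrite !inE -orbA => /or3P [] /eqP ->; rewrite !eq_shift8.
apply: (sepy_wins_by_closing (v := shift a 2) (c := c) (u := shift a 1) (x := shift a 3)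
  live (@twin_not_dom_end a c w d)).
- by rewrite colored_play colored_twin !inE !eq_shift8 ?ne2w.
- by rewrite cnbhd_shift //= !inE eqxx.
- rewrite disjoints_subset colored_play colored_twin; apply/subsetP => x.
  rewrite cnbhd_shift //= !inE -orbA => /or3P [] /eqP ->;
  by rewrite !eq_shift8 ?ne0w ?ne1w ?ne2w.
- apply/subsetP => x; rewrite /twin !in_Vc_play cnbhd_shift //= !inE -orbA.
  by move=> /or3P [] /eqP ->; rewrite !eq_shift8 ?ne3w ?ne4w //= eqxx.
Qed.

Lemma sepy_wins_twin_far a c w d :
  w \notin colored (twin a c) -> w \notin [set shift a 5; shift a 6; shift a 7] ->
  ~ sepy_end E (play (twin a c) w d) -> SepyWins E false (play (twin a c) w d).
Proof.
rewrite colored_twin => w_free w_far live.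
have [ne3w ne4w] : (shift a 3 == w) = false /\ (shift a 4 == w) = false.
  by move: w_free; rewrite !inE negb_or ![w == _]eq_sym => /andP [/negbTE -> /negbTE ->].
have [ne5w ne6w ne7w] : [/\ (shift a 5 == w) = false, (shift a 6 == w) = false
    & (shift a 7 == w) = false].
  move: w_far; rewrite !inE !negb_or -andbA ![w == _]eq_sym.
  by move=> /and3P [/negbTE -> /negbTE -> /negbTE ->].
apply: (sepy_wins_by_closing (v := shift a 5) (c := c) (u := shift a 6) (x := shift a 4)
  live (@twin_not_dom_end a c w d)).
- by rewrite colored_play colored_twin !inE !eq_shift8 ?ne5w.
- by rewrite cnbhd_shift //= !inE eqxx orbT.
- rewrite disjoints_subset colored_play colored_twin; apply/subsetP => x.
  rewrite cnbhd_shift //= !inE -orbA => /or3P [] /eqP ->;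
  by rewrite !eq_shift8 ?ne5w ?ne6w ?ne7w.
- apply/subsetP => x; rewrite /twin !in_Vc_play cnbhd_shift //= !inE -orbA.
  by move=> /or3P [] /eqP ->; rewrite !eq_shift8 ?ne3w ?ne4w //= eqxx.
Qed.

Lemma sepy_wins_twin a c w d :
  w \notin colored (twin a c) -> SepyWins E false (play (twin a c) w d).
Proof.
move=> w_free; have [ended | live] := sepy_endP E (play (twin a c) w d).
  exact: SW_end.
have [w_near | w_far] := boolP (w \in [set shift a 5; shift a 6; shift a 7]).
  exact: sepy_wins_twin_near.
exact: sepy_wins_twin_far.
Qed.

Lemma sepy_wins_cycle : sepy_wins_dom_start E.
Proof.
apply: SW_dom => [||v c _].
- by apply: cycle_not_sepy_end; rewrite colored_empty cards0.
- by apply: cycle_not_dom_end; rewrite colored_empty cards0.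
have [a ->] : exists a, v = shift a 3 by apply: shift_surj; apply: leq_trans n_ge8.
have colored_s1 : colored (play (@empty_position _) (shift a 3) c) = [set shift a 3].
  by rewrite colored_play colored_empty setU0.
apply: (SW_sepy (v := shift a 4) (c := c)).
- by apply: cycle_not_sepy_end; rewrite colored_s1 cards1.
- by apply: cycle_not_dom_end; rewrite colored_s1 cards1.
- apply: (legal_uncolored (u := shift a 5)).
  + by rewrite colored_s1 inE eq_shift8.
  + by rewrite cnbhd_shift //= !inE eqxx orbT.
  + by rewrite colored_s1 cnbhd_shift //= disjoint_sym disjoints1 !inE !eq_shift8.
apply: SW_dom => [||w d [w_free _]].
- by apply: cycle_not_sepy_end; rewrite card_colored_twin.
- by apply: cycle_not_dom_end; rewrite card_colored_twin.
by apply: sepy_wins_twin; rewrite inE negbK; apply/eqP.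
Qed.

End Cycle.

Theorem proposition6 (n : nat) : 8 <= n -> sepy_wins_dom_start (@cycle_rel n).
Proof. exact: sepy_wins_cycle. Qed.
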